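(* Let $\mathbb P\in\mathcal P^o$, let $x^\star(\mathbb P)\in\arg\min\{\mathrm{Var}_{\mathbb P}(\ell(x,\xi)):x\in\arg\min_{x'\in\mathcal X}c(x',\mathbb P)\}$ be a minimizer of $c(\cdot,\mathbb P)$ of lowest variance, and for each $T$ let $\hat x^{\mathrm V}_T(\mathbb P)\in\arg\min_{x\in\mathcal X}\hat c_{\mathrm V}(x,\mathbb P,T)$ and $\hat c_{\mathrm V}^\star(\mathbb P,T)=\min_{x\in\mathcal X}\hat c_{\mathrm V}(x,\mathbb P,T)$. Then for all $T\in\mathbb N$, $$|\hat c_{\mathrm V}^\star(\mathbb P,T)-c^\star(\mathbb P)|\le\sqrt{\tfrac{2a_T}{T}\mathrm{Var}_{\mathbb P}(\ell(x^\star(\mathbb P),\xi))}.$$ If moreover $a_T/T\to0$, then $\hat c_{\mathrm V}^\star(\mathbb P,T)-c^\star(\mathbb P)=\sqrt{\frac{2a_T}{T}\mathrm{Var}_{\mathbb P}(\ell(x^\star(\mathbb P),\xi))}+o\big(\sqrt{a_T/T}\big)$ and $\mathrm{Var}_{\mathbb P}(\ell(\hat x^{\mathrm V}_T(\mathbb P),\xi))\to\mathrm{Var}_{\mathbb P}(\ell(x^\star(\mathbb P),\xi))$ as $T\to\infty$.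
   Context: $\Sigma=\{1,\dots,d\}$ finite, $\mathcal P$ the probability simplex and $\mathcal P^o$ its relative interior. $\mathcal X\subset\mathbb R^n$ compact, $\ell:\mathcal X\times\Sigma\to\mathbb R$ continuous in $x$. $c(x,\mathbb P)=\sum_i\ell(x,i)\mathbb P(i)$, $c^\star(\mathbb P)=\min_{x\in\mathcal X}c(x,\mathbb P)$, $\mathrm{Var}_{\mathbb P}(\ell(x,\xi))=\sum_i\mathbb P(i)(\ell(x,i)-c(x,\mathbb P))^2$. $(a_T)$ is a sequence of positive reals. SVP predictor: $\hat c_{\mathrm V}(x,\mathbb P,T)=c(x,\mathbb P)+\sqrt{\frac{2a_T}{T}\mathrm{Var}_{\mathbb P}(\ell(x,\xi))}$. *)

From HB Require Import structures.
From mathcomp Require Import all_boot all_order all_algebra.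
From mathcomp Require Import all_classical all_reals all_analysis.
Set Implicit Arguments. Unset Strict Implicit. Unset Printing Implicit Defensive.
Import Order.TTheory GRing.Theory Num.Theory.
Import numFieldNormedType.Exports.
Local Open Scope classical_set_scope.
Local Open Scope ring_scope.

Section Defs.
Variables (R : realType) (n d : nat).
(* Sigma = 'I_d, decisions x : 'rV[R]_n, P : 'I_d -> R a probability vector *)
Variable ell : 'rV[R]_n -> 'I_d -> R.

(* P in the relative interior of the probability simplex *)
Definition prob_interior (P : 'I_d -> R) : Prop :=
  (forall i, 0 < P i) /\ \sum_(i < d) P i = 1.

Definition cost (P : 'I_d -> R) (x : 'rV[R]_n) : R := \sum_(i < d) ell x i * P i.

Definition varP (P : 'I_d -> R) (x : 'rV[R]_n) : R :=
  \sum_(i < d) P i * (ell x i - cost P x) ^+ 2.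

Definition cstar (X : set 'rV[R]_n) (P : 'I_d -> R) : R :=
  inf [set cost P x | x in X].

Definition chatV (a : nat -> R) (P : 'I_d -> R) (T : nat) (x : 'rV[R]_n) : R :=
  cost P x + Num.sqrt (2 * a T / T%:R * varP P x).

Definition chatVstar (X : set 'rV[R]_n) (a : nat -> R) (P : 'I_d -> R) (T : nat) : R :=
  inf [set chatV a P T x | x in X].
End Defs.

From HB Require Import structures.
From mathcomp Require Import all_boot all_order all_algebra.
From mathcomp Require Import all_classical all_reals all_analysis.
From mathcomp Require Import lra ring.
Set Implicit Arguments. Unset Strict Implicit. Unset Printing Implicit Defensive.
Import Order.TTheory GRing.Theory Num.Theory.
Import numFieldNormedType.Exports.
Local Open Scope classical_set_scope.
Local Open Scope ring_scope.

(* Write c = c(., P), V = Var_P(ell(., xi)), w_T = 2 a_T / T, and let xstar be a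
   lowest-variance minimizer of c and xhat_T a minimizer of c + sqrt(w_T V).
   Both infima in the statement are attained (at xstar and at xhat_T), so
     c(xstar) <= c(xhat_T) + sqrt(w_T V(xhat_T)) <= c(xstar) + sqrt(w_T V(xstar)),
   which is the non-asymptotic bound; comparing the two sides also gives
   V(xhat_T) <= V(xstar).  When a_T / T -> 0 the cost gap c(xhat_T) - c(xstar)
   vanishes, and a compactness argument on the lexicographic problem
   "minimize c, then V" shows that every almost-minimizer of c has variance
   almost at least V(xstar); hence V(xhat_T) -> V(xstar).  Finally subadditivity of
   the square root bounds the error of the predictor by
   sqrt(a_T / T) * sqrt(2 (V(xstar) - V(xhat_T))), which is o(sqrt(a_T / T)). *)

Section RealFacts.
Variable R : realType.

Lemma inf_attained (S : set R) (x : R) :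
  S x -> (forall y, S y -> x <= y) -> inf S = x.
Proof.
move=> Sx x_lb; apply/le_anti/andP; split.
  by apply: ge_inf => //; exists x => y /x_lb.
by apply: lb_le_inf; [exists x | move=> y /x_lb].
Qed.

Lemma sqrt_subadd (u w : R) : 0 <= u -> 0 <= w ->
  Num.sqrt (u + w) <= Num.sqrt u + Num.sqrt w.
Proof.
move=> u0 w0.
have s0 : 0 <= Num.sqrt u + Num.sqrt w by apply: addr_ge0; exact: sqrtr_ge0.
rewrite -(ger0_norm s0) -sqrtr_sqr ler_sqrt; last exact: sqr_ge0.
rewrite sqrrD !sqr_sqrtr //.
have := mulr_ge0 (sqrtr_ge0 u) (sqrtr_ge0 w); lra.
Qed.

Lemma eqo_of_vanishing_factor (u v w : nat -> R) :
  (\forall T \near \oo, `|u T| <= `|v T| * w T) -> w @ \oo --> 0 ->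
  u =o_\oo v.
Proof.
move=> uvw w0; apply/eqoP => e e0.
near=> T.
have wT : w T <= e by near: T; apply: (cvgr_le _ w0).
have uT : `|u T| <= `|v T| * w T by near: T.
by apply: le_trans uT _; rewrite mulrC ler_wpM2r.
Unshelve. all: by end_near.
Qed.

Lemma sqrt_cvg0 (u : nat -> R) :
  u @ \oo --> 0 -> (fun T => Num.sqrt (u T)) @ \oo --> 0.
Proof.
by move=> u0; rewrite -sqrtr0; apply: continuous_cvg => //; exact: sqrt_continuous.
Qed.

Lemma cvg_from_below (u : nat -> R) (l : R) :
  (forall e, 0 < e -> \forall T \near \oo, l - e < u T <= l) -> u @ \oo --> l.
Proof.
move=> u_close; apply/cvgrPdist_lt => e e0.
apply: filterS (u_close _ e0) => T /andP[lo hi].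
by rewrite ger0_norm ?subr_ge0 // ltrBlDr -ltrBlDl.
Qed.
End RealFacts.

(* The gap is the minimum over X of
   f - f xs + max(g - g xs + eps, 0), which is positive by the hypotheses. *)
Section AlmostMinimizers.
Variables (R : realType) (n : nat) (X : set 'rV[R]_n) (f g : 'rV[R]_n -> R).
Hypotheses (X_compact : compact X)
  (f_cont : {within X, continuous f}) (g_cont : {within X, continuous g}).
Variable xs : 'rV[R]_n.
Hypotheses (X_xs : X xs) (xs_min : forall y, X y -> f xs <= f y)
  (xs_lex : forall x, X x -> (forall y, X y -> f x <= f y) -> g xs <= g x).

Lemma almost_minimizers_lex (eps : R) : 0 < eps ->
  exists2 delta : R, 0 < delta &
    forall x, X x -> f x - f xs < delta -> g xs - eps < g x.
Proof.
move=> eps0.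
have max_ge0 (t : R) : 0 <= Num.max t 0 by rewrite le_max lexx orbT.
pose phi (x : 'rV[R]_n) : R := f x - f xs + Num.max (g x - g xs + eps) 0.
have phi_cont : {within X, continuous phi}.
  move=> x; apply: cvgD; first by apply: cvgB; [exact: f_cont | exact: cvg_cst].
  have t_cont : {within X, continuous (fun x => g x - g xs + eps)}.
    by move=> y; apply: cvgD; [apply: cvgB; [exact: g_cont|exact: cvg_cst]|exact: cvg_cst].
  exact: (continuous_max (t_cont x) (cvg_cst _)).
have phi_pos x : X x -> 0 < phi x.
  move=> Xx; rewrite /phi.
  have [lt|ge] := ltP (f xs) (f x); first by have := max_ge0 (g x - g xs + eps); lra.
  have x_min y : X y -> f x <= f y by move=> Xy; have := xs_min Xy; lra.
  have := xs_lex Xx x_min; have := xs_min Xx.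
  have : g x - g xs + eps <= Num.max (g x - g xs + eps) 0 by rewrite le_max lexx.
  lra.
have [m Xm m_min] := EVT_min_rV (ex_intro _ xs X_xs) X_compact phi_cont.
exists (phi m); first by apply: phi_pos; rewrite -inE.
move=> x Xx close; have := m_min x; rewrite inE => /(_ Xx).
have := max_ge0 (g m - g xs + eps); move: close; rewrite /phi.
by have [t_le0|t_gt0] := lerP (g x - g xs + eps) 0; lra.
Qed.
End AlmostMinimizers.

Section StatisticsContinuity.
Variables (R : realType) (n d : nat) (X : set 'rV[R]_n).
Variables (ell : 'rV[R]_n -> 'I_d -> R) (P : 'I_d -> R).
Hypothesis ell_cont : forall i : 'I_d, {within X, continuous (fun x => ell x i)}.

Lemma cost_continuous : {within X, continuous (cost ell P)}.
Proof.
move=> x; apply: cvg_big => // [|i _]; first exact: add_continuous.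
by apply: cvgM; [exact: ell_cont | exact: cvg_cst].
Qed.

Lemma varP_continuous : {within X, continuous (varP ell P)}.
Proof.
move=> x; apply: cvg_big => // [|i _]; first exact: add_continuous.
apply: cvgM; first exact: cvg_cst.
rewrite expr2; under eq_cvg do rewrite expr2.
by apply: cvgM; apply: cvgB; [exact: ell_cont | exact: cost_continuous
                              | exact: ell_cont | exact: cost_continuous].
Qed.
End StatisticsContinuity.

Section SVPPredictor.
Variables (R : realType) (n d : nat) (X : set 'rV[R]_n).
Variables (ell : 'rV[R]_n -> 'I_d -> R) (a : nat -> R) (P : 'I_d -> R).
Variables (xstar : 'rV[R]_n) (xhat : nat -> 'rV[R]_n).
Hypotheses (a_pos : forall T, 0 < a T) (P_pos : forall i, 0 < P i).
Hypotheses (X_xstar : X xstar) (xstar_min : forall y, X y -> cost ell P xstar <= cost ell P y).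
Hypotheses (X_xhat : forall T, X (xhat T))
  (xhat_min : forall T y, X y -> chatV ell a P T (xhat T) <= chatV ell a P T y).

Local Notation c := (cost ell P).
Local Notation V := (varP ell P).

Lemma varP_ge0 x : 0 <= V x.
Proof. by apply: sumr_ge0 => i _; apply: mulr_ge0; [exact: ltW | exact: sqr_ge0]. Qed.

Lemma cstar_attained : cstar ell X P = c xstar.
Proof. by apply: inf_attained; [exists xstar | move=> _ [y Xy <-]; exact: xstar_min]. Qed.

Lemma chatVstar_attained T : chatVstar ell X a P T = chatV ell a P T (xhat T).
Proof. by apply: inf_attained; [exists (xhat T) | move=> _ [y Xy <-]; exact: xhat_min]. Qed.

Lemma svp_gap_bounds T :
  c xstar <= chatV ell a P T (xhat T) <= c xstar + Num.sqrt (2 * a T / T%:R * V xstar).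
Proof.
apply/andP; split; last exact: xhat_min.
rewrite /chatV -[leLHS]addr0.
by apply: lerD; [exact: xstar_min | exact: sqrtr_ge0].
Qed.

Lemma cost_xhat_gap T :
  c (xhat T) - c xstar <= Num.sqrt (2 * a T / T%:R * V xstar).
Proof.
have /andP[_] := svp_gap_bounds T; rewrite /chatV.
by have := sqrtr_ge0 (2 * a T / T%:R * V (xhat T)); lra.
Qed.

(* Since xstar minimizes the cost, xhat T can only win through a smaller penalty. *)
Lemma varP_xhat_le T : (0 < T)%N -> V (xhat T) <= V xstar.
Proof.
move=> T0.
have w_gt0 : 0 < 2 * a T / T%:R by apply: divr_gt0; [apply: mulr_gt0 | rewrite ltr0n].
have := xhat_min T X_xstar; have := xstar_min (X_xhat T); rewrite /chatV => c_le hat_le.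
rewrite -(ler_pM2l w_gt0) -ler_sqrt; first lra.
by apply: mulr_ge0; [exact: ltW | exact: varP_ge0].
Qed.

Hypotheses (X_compact : compact X)
  (ell_cont : forall i : 'I_d, {within X, continuous (fun x => ell x i)})
  (xstar_lex : forall x, X x -> (forall y, X y -> c x <= c y) -> V xstar <= V x)
  (rate0 : (fun T => a T / T%:R) @ \oo --> (0 : R)).

Lemma svp_radius_vanishes :
  (fun T => Num.sqrt (2 * a T / T%:R * V xstar)) @ \oo --> 0.
Proof.
apply: sqrt_cvg0.
have -> : (fun T => 2 * a T / T%:R * V xstar) = (fun T => 2 * (a T / T%:R) * V xstar).
  by apply/funext => T; rewrite mulrA.
rewrite -(mul0r (V xstar)) -(mulr0 2).
exact: cvgM (cvgM (cvg_cst _) rate0) (cvg_cst _).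
Qed.

Lemma varP_xhat_cvg : (fun T => V (xhat T)) @ \oo --> V xstar.
Proof.
apply: cvg_from_below => e e0.
have [delta delta0 close] := almost_minimizers_lex X_compact
  (cost_continuous ell_cont) (varP_continuous ell_cont) X_xstar xstar_min xstar_lex e0.
near=> T.
have T0 : (0 < T)%N by near: T; exact: nbhs_infty_gt.
have gap : c (xhat T) - c xstar < delta.
  apply: le_lt_trans (cost_xhat_gap T) _.
  by near: T; exact: (cvgr_lt _ svp_radius_vanishes).
by rewrite (close _ (X_xhat T) gap) varP_xhat_le.
Unshelve. all: by end_near.
Qed.

Lemma svp_error_bound T : (0 < T)%N ->
  `|chatV ell a P T (xhat T) - c xstar - Num.sqrt (2 * a T / T%:R * V xstar)|
    <= `|Num.sqrt (a T / T%:R)| * Num.sqrt (2 * (V xstar - V (xhat T))).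
Proof.
move=> T0; have := svp_gap_bounds T; have := xstar_min (X_xhat T).
rewrite /chatV -[2 * a T / _]mulrA; set q := a T / T%:R.
have q0 : 0 <= q by apply: divr_ge0; [exact: ltW | exact: ler0n].
have Vh0 := varP_ge0 (xhat T); have Vgap : 0 <= V xstar - V (xhat T).
  by rewrite subr_ge0 varP_xhat_le.
have sqrt_split : Num.sqrt (2 * q * V xstar) <=
    Num.sqrt (2 * q * V (xhat T)) + Num.sqrt q * Num.sqrt (2 * (V xstar - V (xhat T))).
  have -> : 2 * q * V xstar =
      2 * q * V (xhat T) + q * (2 * (V xstar - V (xhat T))) by ring.
  by rewrite -(sqrtrM _ q0); apply: sqrt_subadd; apply: mulr_ge0 => //; apply: mulr_ge0.
rewrite (ger0_norm (sqrtr_ge0 q)) => c_le /andP[lo hi].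
rewrite ler_norml; apply/andP; split.
  by have := sqrtr_ge0 (2 * q * V (xhat T)); lra.
by have := mulr_ge0 (sqrtr_ge0 q) (sqrtr_ge0 (2 * (V xstar - V (xhat T)))); lra.
Qed.

Lemma variance_gap_vanishes :
  (fun T => Num.sqrt (2 * (V xstar - V (xhat T)))) @ \oo --> 0.
Proof.
apply: sqrt_cvg0; rewrite -(mulr0 2) -(subrr (V xstar)).
exact: cvgM (cvg_cst _) (cvgB (cvg_cst _) varP_xhat_cvg).
Qed.
End SVPPredictor.

Theorem mainTheorem16 (R : realType) (n d : nat)
  (X : set 'rV[R]_n) (ell : 'rV[R]_n -> 'I_d -> R) (a : nat -> R)
  (P : 'I_d -> R) (xstar : 'rV[R]_n) (xhat : nat -> 'rV[R]_n) :
  compact X ->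
  (forall i : 'I_d, {within X, continuous (fun x => ell x i)}) ->
  (forall T, 0 < a T) ->
  prob_interior P ->
  (* xstar minimizes c(., P) over X, with lowest variance among minimizers *)
  X xstar ->
  (forall y, X y -> cost ell P xstar <= cost ell P y) ->
  (forall x, X x -> (forall y, X y -> cost ell P x <= cost ell P y) ->
     varP ell P xstar <= varP ell P x) ->
  (* xhat T minimizes the SVP predictor over X *)
  (forall T, X (xhat T)) ->
  (forall T y, X y -> chatV ell a P T (xhat T) <= chatV ell a P T y) ->
  (forall T : nat, (0 < T)%N ->
     `| chatVstar ell X a P T - cstar ell X P |
       <= Num.sqrt (2 * a T / T%:R * varP ell P xstar))
  /\
  ((fun T => a T / T%:R) @ \oo --> (0 : R) ->
     (fun T => chatVstar ell X a P T - cstar ell X P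
               - Num.sqrt (2 * a T / T%:R * varP ell P xstar))
       =o_\oo (fun T => Num.sqrt (a T / T%:R))
     /\ (fun T => varP ell P (xhat T)) @ \oo --> varP ell P xstar).
Proof.
move=> X_compact ell_cont a_pos [P_pos _] X_xstar xstar_min xstar_lex X_xhat xhat_min.
have predictor_min T : chatVstar ell X a P T = chatV ell a P T (xhat T).
  exact: chatVstar_attained.
have cost_min : cstar ell X P = cost ell P xstar by exact: cstar_attained.
split=> [T _|rate0].
  rewrite predictor_min cost_min.
  have /andP[lo hi] := svp_gap_bounds X_xstar xstar_min X_xhat xhat_min T.
  by rewrite ger0_norm ?subr_ge0 // lerBlDl.
split; last exact: (varP_xhat_cvg a_pos P_pos X_xstar xstar_min X_xhat xhat_min
                         X_compact ell_cont xstar_lex rate0).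
apply: eqo_of_vanishing_factor (variance_gap_vanishes a_pos P_pos X_xstar xstar_min
                         X_xhat xhat_min X_compact ell_cont xstar_lex rate0).
near=> T; rewrite predictor_min cost_min.
apply: (svp_error_bound a_pos P_pos X_xstar xstar_min X_xhat xhat_min).
by near: T; exact: nbhs_infty_gt.
Unshelve. all: by end_near.
Qed.
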